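(* Let $a$ be the unique positive real number with $\frac{1-\ln a}{a}=\frac1e$ (so $a\approx1.54$), and let $\psi_a(x)=1-(1-x)a^x$ for $x\in[0,1]$. Then $\psi_a$ is a convex, strictly increasing, three times differentiable bijection of $[0,1]$ onto $[0,1]$ with $\psi_a'>0$ on $[0,1]$, and it satisfies: (1) $x\psi_a'(x)/\psi_a(x)$ is strictly increasing on $(0,1]$; (2) $x\psi_a''(x)/\psi_a'(x)$ is strictly increasing on $(0,1]$; (3) $\psi_a(e^{-r/e})+\psi_a(re^{-r/e})\ge1$ for all $0\le r\le1$. *)

From Stdlib Require Import Reals.
Open Scope R_scope.

Definition psi (a x : R) : R := 1 - (1 - x) * Rpower a x.

Definition convex_on_01 (f : R -> R) : Prop :=
  forall x y t, 0 <= x <= 1 -> 0 <= y <= 1 -> 0 <= t <= 1 ->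
    f (t * x + (1 - t) * y) <= t * f x + (1 - t) * f y.

(* With L = ln a the defining equation reads e^L = e (1 - L); since e^u - e (1 - u)
   is increasing, this determines L, and comparing at 2/5 and 1/2 gives 2/5 < L < 1/2.
   Then psi a x = 1 - (1 - x) e^(L x), with psi' = e^(L x) (1 - L + L x) > 0 and
   psi'' > 0, whence monotonicity and convexity.  The elasticity x psi''/psi' equals
   L x + 1 - (1 - L)/(1 - L + L x), visibly increasing, and this transfers to x psi'/psi
   because psi (0) = 0.  For (3), both terms are bounded using the Pade approximant
   e^t <= (2 + t)/(2 - t) and e^(-t) <= 1/(1 + t); what remains is a polynomial
   inequality in r, 1/e and 1 - L. *)

From Stdlib Require Import Reals Lra Psatz.
From Coquelicot Require Import Coquelicot.
Open Scope R_scope.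

Lemma strictly_increasing_of_deriv_pos (f f' : R -> R) a b : a < b ->
  (forall x, a <= x <= b -> derivable_pt_lim f x (f' x)) ->
  (forall x, a < x < b -> 0 < f' x) -> f a < f b.
Proof.
intros Hab Hd Hpos.
destruct (MVT_cor2 f f' a b Hab Hd) as [c [Hmvt Hc]].
specialize (Hpos c Hc); nra.
Qed.

Lemma increasing_of_deriv_nonneg (f f' : R -> R) a b : a <= b ->
  (forall x, a <= x <= b -> derivable_pt_lim f x (f' x)) ->
  (forall x, a <= x <= b -> 0 <= f' x) -> f a <= f b.
Proof.
intros Hab Hd Hpos.
destruct (Req_dec a b) as [<-|Hne]; [lra|].
destruct (MVT_cor2 f f' a b ltac:(lra) Hd) as [c [Hmvt Hc]].
assert (0 <= f' c) by (apply Hpos; lra); nra.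
Qed.

Lemma exp_le_pade t : 0 <= t < 2 -> exp t <= (2 + t) / (2 - t).
Proof.
intros Ht.
set (g := fun u => (u - 2) * exp u + (2 + u)).
assert (Hg : g 0 <= g t).
{ apply (increasing_of_deriv_nonneg g (fun u => (u - 1) * exp u + 1)); [lra| |].
  - intros u _; apply is_derive_Reals; unfold g; auto_derive; auto; ring.
  - intros u _.
    (* [(u - 1) e^u + 1 >= 0] is [1 - u <= e^(-u)] multiplied by [e^u]. *)
    assert (1 - u <= exp (- u)) by (generalize (exp_ineq1_le (- u)); lra).
    assert (exp (- u) * exp u = 1) by (rewrite <- exp_plus, Rplus_opp_l; apply exp_0).
    assert (0 < exp u) by apply exp_pos; nra. }
unfold g in Hg; rewrite exp_0 in Hg.
apply Rcomplements.Rle_div_r; lra.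
Qed.

Lemma exp_neg_ge_pade s : 0 <= s < 2 -> (2 - s) / (2 + s) <= exp (- s).
Proof.
intros Hs; rewrite exp_Ropp.
assert (0 < exp s) by apply exp_pos.
replace ((2 - s) / (2 + s)) with (/ ((2 + s) / (2 - s))) by (field; lra).
apply Rinv_le_contravar; [lra | now apply exp_le_pade].
Qed.

Lemma convex_on_01_of_deriv_increasing (f f' : R -> R) :
  (forall x, 0 <= x <= 1 -> derivable_pt_lim f x (f' x)) ->
  (forall x y, 0 <= x -> x <= y -> y <= 1 -> f' x <= f' y) ->
  convex_on_01 f.
Proof.
intros Hd Hmono.
assert (Hlt : forall x y t, 0 <= x -> x < y -> y <= 1 -> 0 < t < 1 ->
          f (t * x + (1 - t) * y) <= t * f x + (1 - t) * f y).
{ intros x y t Hx Hxy Hy Ht.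
  set (z := t * x + (1 - t) * y).
  assert (Hxz : x < z) by (unfold z; nra).
  assert (Hzy : z < y) by (unfold z; nra).
  destruct (MVT_cor2 f f' x z Hxz) as [p [Hp Hpr]]; [intros; apply Hd; lra|].
  destruct (MVT_cor2 f f' z y Hzy) as [q [Hq Hqr]]; [intros; apply Hd; lra|].
  assert (f' p <= f' q) by (apply Hmono; lra).
  (* the chord slope on [x,z] is at most the chord slope on [z,y] *)
  assert (0 <= t * (1 - t) * (y - x) * (f' q - f' p)).
  { apply Rmult_le_pos; [|lra]. apply Rmult_le_pos; [|lra]. nra. }
  replace (f x) with (f z - f' p * (z - x)) by lra.
  replace (f y) with (f z + f' q * (y - z)) by lra.
  unfold z in *; nra. }
intros x y t Hx Hy Ht.
destruct (Req_dec t 0) as [->|Ht0].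
{ replace (0 * x + (1 - 0) * y) with y by ring; lra. }
destruct (Req_dec t 1) as [->|Ht1].
{ replace (1 * x + (1 - 1) * y) with x by ring; lra. }
destruct (Rtotal_order x y) as [Hxy|[<-|Hxy]].
- apply Hlt; lra.
- replace (t * x + (1 - t) * x) with x by ring; lra.
- replace (t * x + (1 - t) * y) with ((1 - t) * y + (1 - (1 - t)) * x) by ring.
  replace (t * f x + (1 - t) * f y) with ((1 - t) * f y + (1 - (1 - t)) * f x) by ring.
  apply Hlt; lra.
Qed.

Definition elasticity (f df : R -> R) (x : R) : R := x * df x / f x.

Section Elasticity.

Variables f f1 f2 : R -> R.
Hypothesis f_deriv : forall t, 0 <= t <= 1 -> derivable_pt_lim f t (f1 t).
Hypothesis f1_deriv : forall t, 0 <= t <= 1 -> derivable_pt_lim f1 t (f2 t).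
Hypothesis f_0 : f 0 = 0.
Hypothesis f1_pos : forall t, 0 < t <= 1 -> 0 < f1 t.
Hypothesis elasticity_f1_increasing : forall s t, 0 < s -> s < t -> t <= 1 ->
  elasticity f1 f2 s < elasticity f1 f2 t.

Let f_pos t : 0 < t <= 1 -> 0 < f t.
Proof.
intros Ht; rewrite <- f_0.
apply (strictly_increasing_of_deriv_pos f f1); [lra | |].
- intros; apply f_deriv; lra.
- intros; apply f1_pos; lra.
Qed.

(* The numerator of the derivative of [elasticity f f1].  Freezing the coefficients taken
   at [x], the map [t |-> (f1 x + x f2 x) f t - f1 x (t f1 t)] vanishes at 0, and its
   derivative is [f1 x f1 t] times the increase of [elasticity f1 f2] from [t] to [x]. *)
Lemma elasticity_deriv_numerator_pos x : 0 < x <= 1 ->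
  0 < (f1 x + x * f2 x) * f x - x * f1 x * f1 x.
Proof.
intros Hx.
set (K := fun t => (f1 x + x * f2 x) * f t - f1 x * (t * f1 t)).
set (K' := fun t => (f1 x + x * f2 x) * f1 t - f1 x * (1 * f1 t + t * f2 t)).
assert (HK : K 0 < K x).
{ apply (strictly_increasing_of_deriv_pos K K'); [lra | |].
  - intros t Ht; unfold K, K'.
    apply derivable_pt_lim_minus.
    + apply derivable_pt_lim_scal with (f := f); apply f_deriv; lra.
    + apply derivable_pt_lim_scal with (f := fun t => t * f1 t).
      apply (derivable_pt_lim_mult id f1); [apply derivable_pt_lim_id | apply f1_deriv; lra].
  - intros t Ht.
    assert (0 < f1 t) by (apply f1_pos; lra).
    assert (0 < f1 x) by (apply f1_pos; lra).
    assert (elasticity f1 f2 t < elasticity f1 f2 x) by (apply elasticity_f1_increasing; lra).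
    replace (K' t) with (f1 x * f1 t * (elasticity f1 f2 x - elasticity f1 f2 t))
      by (unfold K', elasticity; field; lra).
    apply Rmult_lt_0_compat; [apply Rmult_lt_0_compat|]; lra. }
unfold K in HK; rewrite f_0 in HK; lra.
Qed.

Lemma elasticity_increasing x y : 0 < x -> x < y -> y <= 1 ->
  elasticity f f1 x < elasticity f f1 y.
Proof.
intros Hx Hxy Hy.
apply (strictly_increasing_of_deriv_pos (elasticity f f1)
   (fun t => ((f1 t + t * f2 t) * f t - t * f1 t * f1 t) / Rsqr (f t))); [lra | |].
- intros t Ht.
  assert (0 < f t) by (apply f_pos; lra).
  replace ((f1 t + t * f2 t) * f t - t * f1 t * f1 t)
    with ((1 * f1 t + t * f2 t) * f t - f1 t * (t * f1 t)) by ring.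
  apply (derivable_pt_lim_div (fun t => t * f1 t) f); [| apply f_deriv; lra | lra].
  apply (derivable_pt_lim_mult id f1); [apply derivable_pt_lim_id | apply f1_deriv; lra].
- intros t Ht.
  assert (0 < f t) by (apply f_pos; lra).
  apply Rdiv_lt_0_compat; [apply elasticity_deriv_numerator_pos; lra | apply Rsqr_pos_lt; lra].
Qed.

End Elasticity.

(* [psi a = psiL (ln a)], since [Rpower a x = exp (x * ln a)]. *)
Definition psiL (L x : R) : R := 1 - (1 - x) * exp (x * L).
Definition psiL1 (L x : R) : R := exp (x * L) * (1 - L + L * x).
Definition psiL2 (L x : R) : R := L * exp (x * L) * (2 - L + L * x).
Definition psiL3 (L x : R) : R := L * L * exp (x * L) * (3 - L + L * x).

Lemma psiL_deriv L x : derivable_pt_lim (psiL L) x (psiL1 L x).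
Proof. apply is_derive_Reals; unfold psiL, psiL1; auto_derive; auto; ring. Qed.

Lemma psiL1_deriv L x : derivable_pt_lim (psiL1 L) x (psiL2 L x).
Proof. apply is_derive_Reals; unfold psiL1, psiL2; auto_derive; auto; ring. Qed.

Lemma psiL2_deriv L x : derivable_pt_lim (psiL2 L) x (psiL3 L x).
Proof. apply is_derive_Reals; unfold psiL2, psiL3; auto_derive; auto; ring. Qed.

Lemma psiL_0 L : psiL L 0 = 0.
Proof. unfold psiL; rewrite Rmult_0_l, exp_0; ring. Qed.

Lemma psiL_1 L : psiL L 1 = 1.
Proof. unfold psiL; ring. Qed.

Lemma psiL_surj_01 L y : 0 <= y <= 1 -> exists x, 0 <= x <= 1 /\ psiL L x = y.
Proof.
intros Hy.
assert (Hc : continuity (fun x => psiL L x - y)).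
{ intro x; apply continuity_pt_minus; [|apply continuity_pt_const; now intros u v].
  apply derivable_continuous_pt; exists (psiL1 L x); apply psiL_deriv. }
destruct (IVT_cor _ 0 1 Hc ltac:(lra)) as [x [Hx Hx0]].
{ rewrite psiL_0, psiL_1; nra. }
exists x; split; [exact Hx | lra].
Qed.

Section PsiL.

Variable L : R.
Hypothesis L_01 : 0 < L < 1.

Lemma psiL1_pos x : 0 <= x -> 0 < psiL1 L x.
Proof. intros; unfold psiL1; apply Rmult_lt_0_compat; [apply exp_pos | nra]. Qed.

Lemma psiL2_pos x : 0 <= x -> 0 < psiL2 L x.
Proof.
intros; unfold psiL2.
apply Rmult_lt_0_compat; [apply Rmult_lt_0_compat; [lra | apply exp_pos] | nra].
Qed.

Lemma psiL_lt x y : 0 <= x -> x < y -> psiL L x < psiL L y.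
Proof.
intros Hx Hxy.
apply (strictly_increasing_of_deriv_pos _ (psiL1 L)); [lra | intros; apply psiL_deriv |].
intros; apply psiL1_pos; lra.
Qed.

Lemma psiL_le x y : 0 <= x -> x <= y -> psiL L x <= psiL L y.
Proof.
intros Hx Hxy; destruct (Req_dec x y) as [<-|]; [lra|].
left; apply psiL_lt; lra.
Qed.

Lemma psiL_maps_01 x : 0 <= x <= 1 -> 0 <= psiL L x <= 1.
Proof. intros; rewrite <- (psiL_0 L), <- (psiL_1 L); split; apply psiL_le; lra. Qed.

Lemma psiL_inj x y : 0 <= x -> 0 <= y -> psiL L x = psiL L y -> x = y.
Proof.
intros Hx Hy E.
destruct (Rtotal_order x y) as [h|[h|h]]; auto.
- assert (psiL L x < psiL L y) by (apply psiL_lt; lra); lra.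
- assert (psiL L y < psiL L x) by (apply psiL_lt; lra); lra.
Qed.

Lemma psiL_convex : convex_on_01 (psiL L).
Proof.
apply (convex_on_01_of_deriv_increasing _ (psiL1 L)); [intros; apply psiL_deriv|].
intros x y Hx Hxy Hy.
apply (increasing_of_deriv_nonneg _ (psiL2 L)); [lra | intros; apply psiL1_deriv |].
intros; left; apply psiL2_pos; lra.
Qed.

Lemma elasticity_psiL1_eq x : 0 <= x ->
  elasticity (psiL1 L) (psiL2 L) x = L * x + 1 - (1 - L) / (1 - L + L * x).
Proof.
intros; unfold elasticity, psiL1, psiL2.
assert (0 < exp (x * L)) by apply exp_pos.
field; split; nra.
Qed.

Lemma elasticity_psiL1_increasing x y : 0 <= x -> x < y ->
  elasticity (psiL1 L) (psiL2 L) x < elasticity (psiL1 L) (psiL2 L) y.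
Proof.
intros Hx Hxy; rewrite !elasticity_psiL1_eq by lra.
assert (L * x < L * y) by nra.
enough ((1 - L) / (1 - L + L * y) < (1 - L) / (1 - L + L * x)) by lra.
apply Rmult_lt_compat_l; [lra|].
apply Rinv_lt_contravar; [apply Rmult_lt_0_compat|]; nra.
Qed.

Lemma elasticity_psiL_increasing x y : 0 < x -> x < y -> y <= 1 ->
  elasticity (psiL L) (psiL1 L) x < elasticity (psiL L) (psiL1 L) y.
Proof.
apply (elasticity_increasing _ _ (psiL2 L)).
- intros; apply psiL_deriv.
- intros; apply psiL1_deriv.
- apply psiL_0.
- intros; apply psiL1_pos; lra.
- intros; apply elasticity_psiL1_increasing; lra.
Qed.

End PsiL.

Definition pade_bound (L y : R) : R := (1 - y) * ((2 + L * y) / (2 - L * y)).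

Lemma one_sub_mul_exp_le_pade_bound L y : 0 <= L -> 0 <= y <= 1 -> L * y < 2 ->
  (1 - y) * exp (y * L) <= pade_bound L y.
Proof.
intros HL Hy HLy; unfold pade_bound.
apply Rmult_le_compat_l; [lra|].
rewrite Rmult_comm; apply exp_le_pade; nra.
Qed.

Lemma pade_bound_decreasing L u v : 0 < L < 1 -> 0 <= u -> u <= v -> v <= 1 ->
  pade_bound L v <= pade_bound L u.
Proof.
intros HL Hu Huv Hv; unfold pade_bound.
assert (0 <= L * u <= L * v) by nra.
assert (L * v < 1) by nra.
assert (L * L * u * v <= L * v) by nra.
assert (0 <= (v - u) * (4 - 4 * L + 2 * L * (u + v) - L * L * u * v)
              / ((2 - L * u) * (2 - L * v))).
{ apply Rdiv_le_0_compat; [apply Rmult_le_pos; nra | apply Rmult_lt_0_compat; lra]. }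
enough (E : (1 - u) * ((2 + L * u) / (2 - L * u)) - (1 - v) * ((2 + L * v) / (2 - L * v))
   = (v - u) * (4 - 4 * L + 2 * L * (u + v) - L * L * u * v) / ((2 - L * u) * (2 - L * v)))
  by lra.
field; lra.
Qed.

Lemma mul_exp_one_sub_le L w W : 0 < L -> 0 <= w <= W ->
  w * exp ((1 - w) * L) <= exp L * (W / (1 + L * W)).
Proof.
intros HL Hw.
replace ((1 - w) * L) with (L + - (L * w)) by ring.
rewrite exp_plus, exp_Ropp.
assert (0 < exp L) by apply exp_pos.
assert (0 <= L * w <= L * W) by nra.
assert (/ exp (L * w) <= / (1 + L * w)).
{ apply Rinv_le_contravar; [lra | apply exp_ineq1_le]. }
assert (w / (1 + L * w) <= W / (1 + L * W)).
{ assert (0 <= (W - w) / ((1 + L * W) * (1 + L * w))).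
  { apply Rdiv_le_0_compat; [lra | apply Rmult_lt_0_compat; lra]. }
  enough (W / (1 + L * W) - w / (1 + L * w) = (W - w) / ((1 + L * W) * (1 + L * w)))
    by lra.
  field; lra. }
replace (w * (exp L * / exp (L * w))) with (exp L * (w * / exp (L * w))) by ring.
apply Rmult_le_compat_l; [lra|].
apply Rle_trans with (w / (1 + L * w)); [apply Rmult_le_compat_l|]; lra.
Qed.

(* With [c = 1 - L] and [k = 1/e]: the numerator of
   [1 - (upper bound of the first term) - (upper bound of the second term)], divided by [r^2]. *)
Definition final_numerator (r k c : R) : R :=
  8 - 8*c*c + 8*k*c - 16*k*c*c + r*(4*k - 12*k*c + 8*k*c*c - 8*k*k*c)
  + r*r*(-10*k*k + 16*k*k*c - 6*k*k*c*c - 6*k*k*k*c + 4*k*k*k*c*c)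
  + r*r*r*k*k*k*(3 - 5*c + 2*c*c).

Lemma final_numerator_nonneg r k c : 0 <= r <= 1 -> 0 < k <= 1/2 -> 1/2 < c < 3/5 ->
  0 <= final_numerator r k c.
Proof.
intros Hr Hk Hc; unfold final_numerator.
assert (Hkc : 0 <= k*c <= 3/10) by nra.
assert (Hcc : c*c <= 9/25) by nra.
assert (A0 : 8 - 8*c*c + 8*k*c - 16*k*c*c >= 4).
{ assert (k*c*(2*c-1) <= 3/10 * (1/5)) by (apply Rmult_le_compat; lra). nra. }
assert (A1 : 4*k - 12*k*c + 8*k*c*c - 8*k*k*c >= -3/2).
{ assert (k*(k*c) <= 1/2*(3/10)) by (apply Rmult_le_compat; lra).
  assert (k*((1-c)*(2*c-1)) <= 1/2*(1/2*(1/5))).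
  { apply Rmult_le_compat; try lra; [nra | apply Rmult_le_compat; lra]. }
  nra. }
assert (Hk2 : 0 <= k*k <= 1/4) by nra.
assert (Hk3 : 0 <= k*k*k <= 1/8) by nra.
assert (A2 : -10*k*k + 16*k*k*c - 6*k*k*c*c - 6*k*k*k*c + 4*k*k*k*c*c >= -3/2).
{ assert (0 <= (1-c)*(5-3*c) <= 2) by nra.
  assert (-4 <= c*(-6+4*c) <= 0) by nra.
  assert ((k*k)*((1-c)*(5-3*c)) <= 1/4*2) by (apply Rmult_le_compat; lra).
  assert ((k*k*k)*(c*(-6+4*c)) >= 1/8*(-4)) by nra.
  nra. }
assert (A3 : 0 <= k*k*k*(3 - 5*c + 2*c*c)) by (apply Rmult_le_pos; nra).
assert (r*(4*k - 12*k*c + 8*k*c*c - 8*k*k*c) >= -3/2) by nra.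
assert (0 <= r*r <= 1) by nra.
assert (r*r*(-10*k*k + 16*k*k*c - 6*k*k*c*c - 6*k*k*k*c + 4*k*k*k*c*c) >= -3/2) by nra.
assert (0 <= r*r*r*k*k*k*(3 - 5*c + 2*c*c)).
{ replace (r*r*r*k*k*k*(3 - 5*c + 2*c*c)) with ((r*r*r)*(k*k*k*(3 - 5*c + 2*c*c))) by ring.
  apply Rmult_le_pos; [nra | lra]. }
lra.
Qed.

Lemma final_ineq r k L : 0 <= r <= 1 -> 0 < k <= 1/2 -> 2/5 < L < 1/2 ->
  2 * (1 - L) * r / (2 + (1 + 2 * L) * k * r)
  + pade_bound L (r * (2 - k * r) / (2 + k * r)) <= 1.
Proof.
intros Hr Hk HL.
assert (0 <= k * r <= 1/2) by nra.
assert (0 <= L * k * r) by nra.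
assert (0 <= L * r <= 1/2) by nra.
set (D := (2 + (1 + 2 * L) * k * r) * ((2 + k * r) * (4 + 2 * k * r - 2 * L * r + L * k * r * r))).
assert (HD : 0 < D) by (unfold D; apply Rmult_lt_0_compat; [|apply Rmult_lt_0_compat]; nra).
assert (0 <= r * r * final_numerator r k (1 - L) / D).
{ apply Rdiv_le_0_compat; [apply Rmult_le_pos; [nra | apply final_numerator_nonneg; lra] | lra]. }
enough (1 - (2 * (1 - L) * r / (2 + (1 + 2 * L) * k * r)
             + pade_bound L (r * (2 - k * r) / (2 + k * r)))
        = r * r * final_numerator r k (1 - L) / D) by lra.
unfold pade_bound, final_numerator, D; field; repeat split; nra.
Qed.

Lemma exp_neg_between s : 0 <= s <= 1/2 -> (2 - s) / (2 + s) <= exp (- s) <= 1.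
Proof.
intros Hs; split; [apply exp_neg_ge_pade; lra|].
rewrite <- exp_0; destruct (Req_dec s 0) as [->|]; [rewrite Ropp_0; lra|].
left; apply exp_increasing; lra.
Qed.

Lemma one_sub_psiL_exp_neg_le L k r : 0 < L -> 0 < k -> k * exp L = 1 - L ->
  0 <= k * r <= 1/2 ->
  1 - psiL L (exp (- (k * r))) <= 2 * (1 - L) * r / (2 + (1 + 2 * L) * k * r).
Proof.
intros HL Hk HeL Hs.
assert (Hy := exp_neg_between (k * r) Hs).
set (y := exp (- (k * r))) in *.
set (W := 2 * (k * r) / (2 + k * r)).
assert (HW : 0 <= 1 - y <= W).
{ unfold W; replace (2 * (k * r) / (2 + k * r)) with (1 - (2 - k * r) / (2 + k * r))
    by (field; lra); lra. }
replace (2 * (1 - L) * r / (2 + (1 + 2 * L) * k * r)) with (exp L * (W / (1 + L * W))).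
- unfold psiL; replace (y * L) with ((1 - (1 - y)) * L) by ring.
  enough ((1 - y) * exp ((1 - (1 - y)) * L) <= exp L * (W / (1 + L * W))) by lra.
  apply mul_exp_one_sub_le; lra.
- rewrite <- HeL; unfold W; field; repeat split; nra.
Qed.

Lemma one_sub_psiL_mul_exp_neg_le L k r : 0 < L < 1 -> 0 <= r <= 1 -> 0 <= k * r <= 1/2 ->
  1 - psiL L (r * exp (- (k * r))) <= pade_bound L (r * (2 - k * r) / (2 + k * r)).
Proof.
intros HL Hr Hs.
assert (Hy := exp_neg_between (k * r) Hs).
set (y := exp (- (k * r))) in *.
assert (0 < y) by apply exp_pos.
set (Y := r * (2 - k * r) / (2 + k * r)).
assert (HY : 0 <= Y <= r * y).
{ unfold Y; split; [apply Rdiv_le_0_compat; nra|].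
  replace (r * (2 - k * r) / (2 + k * r)) with (r * ((2 - k * r) / (2 + k * r))) by (field; lra).
  apply Rmult_le_compat_l; lra. }
unfold psiL; apply Rle_trans with (pade_bound L (r * y)).
- enough ((1 - r * y) * exp (r * y * L) <= pade_bound L (r * y)) by lra.
  apply one_sub_mul_exp_le_pade_bound; nra.
- apply pade_bound_decreasing; nra.
Qed.

Lemma psiL_sum_ge_1 L r : 2/5 < L < 1/2 -> exp L = exp 1 * (1 - L) -> 0 <= r <= 1 ->
  psiL L (exp (- r / exp 1)) + psiL L (r * exp (- r / exp 1)) >= 1.
Proof.
intros HL HeL Hr.
assert (He : 2 <= exp 1) by (generalize (exp_ineq1_le 1); lra).
set (k := / exp 1).
assert (Hk : 0 < k <= 1/2).
{ split; [apply Rinv_0_lt_compat; lra|].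
  replace (1/2) with (/2) by field; apply Rinv_le_contravar; lra. }
assert (HkL : k * exp L = 1 - L) by (rewrite HeL; unfold k; field; lra).
replace (- r / exp 1) with (- (k * r)) by (unfold k; field; lra).
assert (Hs : 0 <= k * r <= 1/2) by nra.
assert (H1 := one_sub_psiL_exp_neg_le L k r ltac:(lra) ltac:(lra) HkL Hs).
assert (H2 := one_sub_psiL_mul_exp_neg_le L k r ltac:(lra) Hr Hs).
assert (H3 := final_ineq r k L Hr Hk HL).
lra.
Qed.

Lemma exp_sub_line_lt u v : u < v ->
  exp u - exp 1 * (1 - u) < exp v - exp 1 * (1 - v).
Proof.
intros Huv.
assert (exp u < exp v) by (apply exp_increasing; lra).
assert (0 < exp 1) by apply exp_pos; nra.
Qed.

Lemma exp_ln_eq_of_defining_eq b : 0 < b -> (1 - ln b) / b = / exp 1 ->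
  exp (ln b) = exp 1 * (1 - ln b).
Proof.
intros Hb Hdef.
assert (0 < exp 1) by apply exp_pos.
rewrite exp_ln by lra.
replace (1 - ln b) with ((1 - ln b) / b * b) by (field; lra).
rewrite Hdef; field; lra.
Qed.

Lemma exp_eq_line_unique u v : exp u = exp 1 * (1 - u) -> exp v = exp 1 * (1 - v) -> u = v.
Proof.
intros Hu Hv.
destruct (Rtotal_order u v) as [h|[h|h]]; auto.
- assert (H := exp_sub_line_lt u v h); lra.
- assert (H := exp_sub_line_lt v u h); lra.
Qed.

Lemma exp_eq_line_bounds L : exp L = exp 1 * (1 - L) -> 2/5 < L < 1/2.
Proof.
intros HL.
assert (H25 : exp (2/5) < exp 1 * (1 - 2/5)).
{ assert (E : exp 1 = exp (2/5) * (exp (3/10) * exp (3/10)))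
    by (rewrite <- !exp_plus; f_equal; field).
  assert (1 + 3/10 <= exp (3/10)) by apply exp_ineq1_le.
  assert (exp (3/10) * exp (3/10) >= 169/100) by nra.
  assert (0 < exp (2/5)) by apply exp_pos; nra. }
assert (H12 : exp 1 * (1 - 1/2) < exp (1/2)).
{ assert (E : exp 1 = exp (1/2) * exp (1/2)) by (rewrite <- exp_plus; f_equal; field).
  assert (exp (1/2) <= (2 + 1/2) / (2 - 1/2)) by (apply exp_le_pade; lra).
  assert (0 < exp (1/2)) by apply exp_pos; nra. }
split.
- destruct (Rle_or_lt L (2/5)) as [[h|h]|h]; [|subst; lra|lra].
  assert (H := exp_sub_line_lt L (2/5) h); lra.
- destruct (Rle_or_lt (1/2) L) as [[h|h]|h]; [|subst; lra|lra].
  assert (H := exp_sub_line_lt (1/2) L h); lra.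
Qed.

Theorem lemma4p2 (a : R) (ha : 0 < a) (hdef : (1 - ln a) / a = / exp 1) :
  (forall b, 0 < b -> (1 - ln b) / b = / exp 1 -> b = a) /\
  convex_on_01 (psi a) /\
  (forall x y, 0 <= x -> x < y -> y <= 1 -> psi a x < psi a y) /\
  (forall x, 0 <= x <= 1 -> 0 <= psi a x <= 1) /\
  (forall x y, 0 <= x <= 1 -> 0 <= y <= 1 -> psi a x = psi a y -> x = y) /\
  (forall y, 0 <= y <= 1 -> exists x, 0 <= x <= 1 /\ psi a x = y) /\
  (exists d1 d2 d3 : R -> R,
     (forall x, 0 <= x <= 1 ->
        derivable_pt_lim (psi a) x (d1 x) /\
        derivable_pt_lim d1 x (d2 x) /\
        derivable_pt_lim d2 x (d3 x)) /\
     (forall x, 0 <= x <= 1 -> 0 < d1 x) /\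
     (forall x y, 0 < x -> x < y -> y <= 1 ->
        x * d1 x / psi a x < y * d1 y / psi a y) /\
     (forall x y, 0 < x -> x < y -> y <= 1 ->
        x * d2 x / d1 x < y * d2 y / d1 y)) /\
  (forall r, 0 <= r <= 1 ->
     psi a (exp (- r / exp 1)) + psi a (r * exp (- r / exp 1)) >= 1).
Proof.
change (psi a) with (psiL (ln a)).
assert (HeL := exp_ln_eq_of_defining_eq a ha hdef).
assert (HL := exp_eq_line_bounds _ HeL).
assert (HL01 : 0 < ln a < 1) by lra.
split; [|split; [|split; [|split; [|split; [|split; [|split]]]]]].
- intros b hb hbdef; apply ln_inv; [exact hb | exact ha |].
  exact (exp_eq_line_unique _ _ (exp_ln_eq_of_defining_eq b hb hbdef) HeL).
- exact (psiL_convex _ HL01).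
- intros x y Hx Hxy _; exact (psiL_lt _ HL01 x y Hx Hxy).
- exact (psiL_maps_01 _ HL01).
- intros x y Hx Hy E; apply (psiL_inj _ HL01); lra.
- exact (psiL_surj_01 (ln a)).
- exists (psiL1 (ln a)), (psiL2 (ln a)), (psiL3 (ln a)); split; [|split; [|split]].
  + intros x _; split; [|split]; [apply psiL_deriv | apply psiL1_deriv | apply psiL2_deriv].
  + intros x Hx; apply psiL1_pos; lra.
  + exact (elasticity_psiL_increasing _ HL01).
  + intros x y Hx Hxy _; apply elasticity_psiL1_increasing; lra.
- intros r Hr; exact (psiL_sum_ge_1 _ r HL HeL Hr).
Qed.
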